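(* Regard $Y$ as a representation of the mirabolic group $P$ through the middle action $\tau$. Then the natural map $\Phi^+\Phi^-Y\to Y$ (the counit of the adjunction $\Phi^+\dashv\Phi^-$) is injective, and its image is the subspace $Y^\circ=S(\mathrm{GL}_2(F)\times F^\times)\subseteq Y$ of functions supported on $\mathrm{GL}_2(F)\times F^\times$.
   Context: Let $F$ be a non-Archimedean local field with $\mathrm{char}(F)\neq2$, and put $G=\mathrm{GL}_2(F)$. Fix a non-trivial character $e$ of $F$. $P=\left\{\begin{pmatrix}a&b\\&1\end{pmatrix}\right\}\subseteq G$ is the mirabolic subgroup, $U=\left\{\begin{pmatrix}1&b\\&1\end{pmatrix}\right\}$, and $\theta\left(\begin{pmatrix}1&b\\&1\end{pmatrix}\right)=e(b)$. $\Phi^-\colon\mathrm{Mod}(P)\to\mathrm{Vect}$ sends a smooth $P$-module $M$ to its quotient by the span of $\pi(u)m-\theta(u)m$ ($u\in U$), and $\Phi^+$ is its left adjoint (in the sense of Bernstein–Zelevinsky; $\Phi^+\mathbb C\cong S(F^\times)$). $Y=S(M_2(F)\times F^\times)$ carries the middle $G$-action $\tau$ coming from the Weil representation. On $P$ it is given by $\tau\begin{pmatrix}a&b\\&1\end{pmatrix}\Psi(g,y)=|a|e(b\det(g)y)\Psi(g,ay)$, and $\tau\begin{pmatrix}&-1\\1&\end{pmatrix}\Psi(g,y)=|y|^2\int_{M_2(F)}\Psi(h,y)e(-y\langle g,h\rangle)\,dh$, where $\langle m,m'\rangle=\mathrm{tr}\,m\,\mathrm{tr}\,m'-\mathrm{tr}(mm')$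 and $dh$ is self-dual. *)

From mathcomp Require Import all_boot all_order all_algebra.
Set Implicit Arguments. Unset Strict Implicit. Unset Printing Implicit Defensive.
Import Order.TTheory GRing.Theory Num.Theory.
Local Open Scope ring_scope.

Section LocalField.
Variables (F : fieldType) (q : nat) (v : F -> int).

Definition vge (x : F) (n : int) : Prop := x = 0 \/ n <= v x.

(* F is a non-Archimedean local field with normalized discrete valuation v
   (onto Z) and residue field of cardinality q: i.e. F is complete for a
   discrete valuation and has finite residue field F_q. *)
Definition nonarch_local_field : Prop :=
  [/\ (1 < q)%N,
      (forall x y, x != 0 -> y != 0 -> v (x * y) = v x + v y) /\
      (forall x y, x != 0 -> y != 0 -> x + y != 0 -> Num.min (v x) (v y) <= v (x + y)),
      (exists pi : F, pi != 0 /\ v pi = 1),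
      (exists r : seq F,
          [/\ size r = q, uniq r, (forall x, x \in r -> vge x 0),
              (forall x y, x \in r -> y \in r -> x != y -> ~ vge (x - y) 1)
            & (forall x, vge x 0 -> exists2 y, y \in r & vge (x - y) 1)])
    & (forall s : nat -> F,
          (forall N : int, exists n0, forall m n, (n0 <= m)%N -> (n0 <= n)%N ->
              vge (s m - s n) N) ->
          exists l, forall N : int, exists n0, forall n, (n0 <= n)%N -> vge (s n - l) N)].

Variable C : numClosedFieldType.

Definition absF (a : F) : C := (q%:R : C) ^ (- v a).

Definition nontriv_char (e : F -> C) : Prop :=
  [/\ (forall x y, e (x + y) = e x * e y),
      (exists x, e x != 1)
    & (exists N : int, forall x, vge x N -> e x = 1)].

Variable e : F -> C.

Definition Yfun := 'M[F]_2 -> F -> C.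

(* Psi in Y = S(M_2(F) x F^x) (extended by zero at y = 0):
   compactly supported in M_2(F) x F^x and locally constant. *)
Definition inY (Psi : Yfun) : Prop :=
  exists N : int,
    (forall (g : 'M[F]_2) y, Psi g y != 0 ->
       [/\ forall i j, vge (g i j) (- N), y != 0 & - N <= v y <= N]) /\
    (forall (g g' : 'M[F]_2) y y', (forall i j, vge (g i j - g' i j) N) -> vge (y - y') N ->
       Psi g y = Psi g' y').

(* Y° = S(GL_2(F) x F^x) inside Y: support bounded away from det g = 0. *)
Definition inYo (Psi : Yfun) : Prop :=
  inY Psi /\ exists N : int, forall (g : 'M[F]_2) y, Psi g y != 0 ->
     \det g != 0 /\ v (\det g) <= N.

(* the middle action tau of p = [[a, b], [0, 1]] (a <> 0) *)
Definition tauP (a b : F) (Psi : Yfun) : Yfun :=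
  fun g y => absF a * e (b * \det g * y) * Psi g (a * y).

(* Y(U, theta) = span { tau(u) Psi - theta(u) Psi : u in U, Psi in Y } *)
Definition inYUth (f : Yfun) : Prop :=
  exists s : seq (F * Yfun),
    foldr (fun p P => inY p.2 /\ P) True s /\
    (forall (g : 'M[F]_2) y, f g y = \sum_(p <- s) (tauP 1 p.1 p.2 g y - e p.1 * p.2 g y)).

(* Phi^- Y = Y / Y(U,theta).  Phi^+ V = c-ind_U^P (theta (x) V), realized as
   S(F^x, V) via phi(a) = f(diag(a,1)), with P-action
   ([[a',b'],[0,1]] . phi)(a) = e(a b') phi(a a').
   Elements of Phi^+ Phi^- Y are represented by maps phi : F -> Y
   (values at a <> 0 matter), taken modulo Y(U,theta) pointwise. *)
Definition inPPY (phi : F -> Yfun) : Prop :=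
  [/\ forall a, a != 0 -> inY (phi a),
      (exists N : int, forall a, a != 0 -> ~ (- N <= v a <= N) -> inYUth (phi a))
    & (exists N : int, forall a a', a != 0 -> a' != 0 -> vge (a - a') N ->
          inYUth (fun g y => phi a g y - phi a' g y))].

Definition eqvPPY (phi phi' : F -> Yfun) : Prop :=
  forall a, a != 0 -> inYUth (fun g y => phi a g y - phi' a g y).

Definition actPP (a' b' : F) (phi : F -> Yfun) : F -> Yfun :=
  fun a g y => e (a * b') * phi (a * a') g y.

(* eps is (a representative of) the counit Phi^+ Phi^- Y -> Y of the
   adjunction Phi^+ -| Phi^-: a well-defined, linear, P-equivariant map whose
   adjunct  V = Phi^- Y -> Phi^- Phi^+ Phi^- Y -> Phi^- Y  is the identity,
   where the unit V ~= Phi^- Phi^+ V is inverse to evaluation at a = 1. *)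
Definition is_counit (eps : (F -> Yfun) -> Yfun) : Prop :=
  [/\ (forall phi, inPPY phi -> inY (eps phi)) /\
      (forall phi phi', inPPY phi -> inPPY phi' -> eqvPPY phi phi' -> eps phi = eps phi'),
      (forall phi phi', inPPY phi -> inPPY phi' ->
          eps (fun a g y => phi a g y + phi' a g y) =
          (fun g y => eps phi g y + eps phi' g y)),
      (forall (c : C) phi, inPPY phi ->
          eps (fun a g y => c * phi a g y) = (fun g y => c * eps phi g y)),
      (forall a' b' phi, a' != 0 -> inPPY phi ->
          eps (actPP a' b' phi) = tauP a' b' (eps phi))
    & (forall phi, inPPY phi -> inYUth (fun g y => eps phi g y - phi 1 g y))].

End LocalField.

From mathcomp Require Import all_boot all_order all_algebra zify ring.
From Stdlib Require Import ClassicalEpsilon Classical FunctionalExtensionality.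
Set Implicit Arguments. Unset Strict Implicit. Unset Printing Implicit Defensive.
Import Order.TTheory GRing.Theory Num.Theory.
Local Open Scope ring_scope.

(* Every tau(u) Psi - theta(u) Psi vanishes on the hypersurface det g * y = 1,
   and conversely a Psi in Y vanishing there lies in Y(U, theta): it is the
   average over b in a finite set B of the elements Psi * (1 - e(b (det g y - 1)))
   of Y(U, theta), because on the support of Psi the value det g y - 1 stays in
   an annulus on which the character sums \sum_(b in B) e(b s) vanish.  So
   Phi^- Y is restriction to that hypersurface, and equivariance under
   diag(t, 1) plus the adjunction identity force every counit to be
     eps(phi)(g, y) = |det g y|^-1 * phi(det g y)(g, (det g)^-1).
   This formula determines phi modulo Y(U, theta), and it is inverted on Y° by
   phi(a) = |a| Psi(., a .).  Its values at det g = 0 vanish because eps(phi) is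
   locally constant while eps(phi)(g + s, y) = 0 for small scalars s != 0.
   Conversely the formula is a counit: phi matters only on a compact annulus of
   values of a, so finitely many phi(rho) control its support and local
   constancy. *)

(* [lia] becomes unusably slow in contexts holding many facts about field
   elements, so only the integer and natural-number hypotheses are kept. *)
Ltac int_lia := repeat match goal with
  | H : ?T |- _ => lazymatch type of T with Prop => idtac end;
      lazymatch T with
      | forall _ : _, _ => clear H
      | context [@Order.le _ _ _ _] => fail
      | context [@Order.lt _ _ _ _] => fail
      | context [leq _ _] => fail
      | @eq int _ _ => fail
      | @eq nat _ _ => fail
      | _ => clear H
      end
  end; lia.

Lemma det_mx2 (R : comPzRingType) (g : 'M[R]_2) :
  \det g = g 0 0 * g 1 1 - g 0 1 * g 1 0.
Proof.
rewrite (expand_det_row _ 0) !big_ord_recl big_ord0 addr0 /cofactor !det_mx11.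
rewrite /= !mxE /= expr0 expr1 mul1r mulN1r mulrN.
have -> : lift 0 0 = 1 :> 'I_2 by apply/val_inj.
by have -> : lift 1 0 = 0 :> 'I_2 by apply/val_inj.
Qed.

Lemma mxtrace2 (R : pzSemiRingType) (g : 'M[R]_2) : \tr g = g 0 0 + g 1 1.
Proof.
rewrite /mxtrace big_ord_recl big_ord1.
by have -> : lift 0 0 = 1 :> 'I_2 by apply/val_inj.
Qed.

Lemma det_scalar_shift (R : comPzRingType) (g : 'M[R]_2) s :
  \det (g + s%:M) = \det g + s * (s + \tr g).
Proof. by rewrite mxtrace2 !det_mx2 !mxE /=; ring. Qed.

Section Valuation.
Variables (F : fieldType) (v : F -> int).
Hypothesis vM : forall x y : F, x != 0 -> y != 0 -> v (x * y) = v x + v y.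
Hypothesis vD : forall x y : F, x != 0 -> y != 0 -> x + y != 0 ->
  Num.min (v x) (v y) <= v (x + y).
Implicit Types (x y z : F) (m n : int).

Lemma v1 : v 1 = 0.
Proof.
have h1 : (1 : F) != 0 by exact: oner_neq0.
by have := vM h1 h1; rewrite mulr1; int_lia.
Qed.

Lemma vN x : x != 0 -> v (- x) = v x.
Proof.
have hN1 : (-1 : F) != 0 by rewrite oppr_eq0 oner_neq0.
have vN1 : v (-1) = 0 by have := vM hN1 hN1; rewrite mulrNN mulr1 v1; int_lia.
by move=> hx; rewrite -mulN1r vM // vN1 add0r.
Qed.

Lemma vV x : x != 0 -> v x^-1 = - v x.
Proof.
move=> hx; have := vM hx (_ : x^-1 != 0); rewrite mulfV // v1 ?invr_eq0 //.
by move=> /(_ hx); int_lia.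
Qed.

Lemma vgeP x n : x != 0 -> vge v x n <-> n <= v x.
Proof. by move=> hx; split => [[/eqP h|//]|h]; [rewrite h in hx | right]. Qed.

Lemma vge_le x m n : vge v x n -> m <= n -> vge v x m.
Proof. by move=> [->|h] hmn; [left|right; int_lia]. Qed.

Lemma vgeN x n : vge v x n -> vge v (- x) n.
Proof.
case: (eqVneq x 0) => [-> _|hx]; first by left; rewrite oppr0.
by rewrite !vgeP ?oppr_eq0 // vN.
Qed.

Lemma vgeD x y n : vge v x n -> vge v y n -> vge v (x + y) n.
Proof.
case: (eqVneq x 0) => [-> _|nx]; first by rewrite add0r.
case: (eqVneq y 0) => [-> //|ny]; first by rewrite addr0.
case: (eqVneq (x + y) 0) => [-> _ _|nxy]; first by left.
rewrite !vgeP // => hx hy; have := vD nx ny nxy; int_lia.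
Qed.

Lemma vgeB x y n : vge v x n -> vge v y n -> vge v (x - y) n.
Proof. by move=> hx /vgeN; apply: vgeD. Qed.

Lemma vgeM x y m n : vge v x m -> vge v y n -> vge v (x * y) (m + n).
Proof.
case: (eqVneq x 0) => [-> _ _|nx]; first by rewrite mul0r; left.
case: (eqVneq y 0) => [-> _ _|ny]; first by rewrite mulr0; left.
by rewrite !vgeP ?mulf_neq0 // vM //; int_lia.
Qed.

Lemma vge_sym x y n : vge v (x - y) n -> vge v (y - x) n.
Proof. by move=> /vgeN; rewrite opprB. Qed.

Lemma vge_trans x y z n : vge v (x - y) n -> vge v (y - z) n -> vge v (x - z) n.
Proof. by move=> h1 h2; have := vgeD h1 h2; rewrite addrA subrK. Qed.

Lemma vge_refl x n : vge v (x - x) n.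
Proof. by rewrite subrr; left. Qed.

Lemma v_addr_dominant x y : x != 0 -> vge v y (v x + 1) ->
  x + y != 0 /\ v (x + y) = v x.
Proof.
move=> hx hy.
have nxy : x + y != 0.
  apply: contra_notN (_ : ~ vge v (- x) (v x + 1)) => [/eqP h|].
    by rewrite -(addKr x y) h addr0 in hy.
  by rewrite vgeP ?oppr_eq0 // vN //; int_lia.
split=> //.
have /(vgeP _ nxy) h1 : vge v (x + y) (v x) by apply: vgeD; [right|apply: (vge_le hy); int_lia].
have : ~ (v x + 1 <= v (x + y)); last by int_lia.
move=> h2; have : vge v ((x + y) - y) (v x + 1) by apply: vgeB => //; right.
by rewrite addrK vgeP //; int_lia.
Qed.

Lemma v_close x y n : x != 0 -> v x < n -> vge v (x - y) n -> y != 0 /\ v y = v x.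
Proof.
move=> hx hvx h.
have : vge v (- (x - y)) (v x + 1) by apply: vgeN; apply: (vge_le h); int_lia.
by move=> /(v_addr_dominant hx); rewrite opprB addrC subrK.
Qed.

Lemma vge_det N (g : 'M[F]_2) :
  (forall i j, vge v (g i j) (- N)) -> vge v (\det g) (- N + - N).
Proof. by move=> hg; rewrite det_mx2; apply: vgeB; apply: vgeM. Qed.

Lemma vge_detB K N (g g' : 'M[F]_2) :
  (forall i j, vge v (g i j) (- K)) -> (forall i j, vge v (g' i j) (- K)) ->
  (forall i j, vge v (g i j - g' i j) N) -> vge v (\det g - \det g') (N + - K).
Proof.
move=> hg hg' hc; rewrite !det_mx2.
have -> : g 0 0 * g 1 1 - g 0 1 * g 1 0 - (g' 0 0 * g' 1 1 - g' 0 1 * g' 1 0) =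
  (g 0 0 - g' 0 0) * g 1 1 + g' 0 0 * (g 1 1 - g' 1 1)
  - ((g 0 1 - g' 0 1) * g 1 0 + g' 0 1 * (g 1 0 - g' 1 0)) by ring.
apply: vgeB; apply: vgeD; try by apply: vgeM.
all: by apply: (vge_le (vgeM (hg' _ _) (hc _ _))); int_lia.
Qed.

Lemma vge_scalar_shift N (g : 'M[F]_2) s :
  vge v s N -> forall i j, vge v (g i j - (g + s%:M) i j) N.
Proof.
move=> hs i j; rewrite !mxE opprD addrA subrr add0r; apply: vgeN.
by case: (i == j); rewrite ?mulr1n ?mulr0n //; left.
Qed.

Lemma exists_conductor (C : numClosedFieldType) (e : F -> C) :
  (exists x, e x != 1) -> (exists N, forall x, vge v x N -> e x = 1) ->
  exists n0, (forall x, vge v x n0 -> e x = 1) /\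
             exists x, vge v x (n0 - 1) /\ e x != 1.
Proof.
move=> [x0 ex0] [N eN]; apply: NNPP => nosharp.
have step n : (forall x, vge v x n -> e x = 1) -> forall x, vge v x (n - 1) -> e x = 1.
  move=> en x hx; apply: NNPP => ex; apply: nosharp; exists n; split => //.
  by exists x; split => //; apply/eqP.
have eNk (k : nat) : forall x, vge v x (N - k%:Z) -> e x = 1.
  elim: k => [|k IH]; first by rewrite subr0.
  have -> : N - k.+1%:Z = N - k%:Z - 1 by int_lia.
  exact: step IH.
have nx0 : x0 != 0 by apply: contraNneq ex0 => ->; apply/eqP/eN; left.
by move/eqP: ex0; apply; apply: (eNk `|N - v x0|%N); right; int_lia.
Qed.

Section Uniformizer.
Variable pi : F.
Hypotheses (pi_neq0 : pi != 0) (v_pi : v pi = 1).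

Lemma v_expz_pi (z : int) : v (pi ^ z) = z.
Proof.
have vX (k : nat) : v (pi ^+ k) = k.
  elim: k => [|k IH]; first by rewrite expr0 v1.
  by rewrite exprS vM ?expf_neq0 // IH v_pi; int_lia.
by case: z => k; rewrite ?NegzE ?invfz // ?vV ?expf_neq0 // vX; int_lia.
Qed.

Lemma exists_small_avoiding m t : exists s, [/\ s != 0, s + t != 0 & m <= v s].
Proof.
have hX (k : int) : pi ^ k != 0 by exact: expfz_neq0.
case: (eqVneq (pi ^ m + t) 0) => h; last by exists (pi ^ m); rewrite v_expz_pi.
exists (pi ^ (m + 1)); split; rewrite ?v_expz_pi //; last by int_lia.
apply/eqP => h'; have : pi ^ m = pi ^ (m + 1) by apply: (addIr t); rewrite h h'.
by move/(congr1 v); rewrite !v_expz_pi; int_lia.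
Qed.

Section ResidueSystem.
Variable r : seq F.
Hypotheses (r_uniq : uniq r)
  (r_int : forall x, x \in r -> vge v x 0)
  (r_sep : forall x y, x \in r -> y \in r -> x != y -> ~ vge v (x - y) 1)
  (r_cover : forall x, vge v x 0 -> exists2 y, y \in r & vge v (x - y) 1).

Lemma residue_translate y0 : y0 \in r ->
  exists2 sigma : F -> F, perm_eq (map sigma r) r &
    forall y, y \in r -> vge v (y + y0 - sigma y) 1.
Proof.
move=> y0r.
pose P y z := z \in r /\ vge v (y + y0 - z) 1.
pose sigma y := epsilon (inhabits 0) (P y).
have Psigma y : y \in r -> P y (sigma y).
  move=> yr; apply: epsilon_spec.
  by have [z zr hz] := r_cover (vgeD (r_int yr) (r_int y0r)); exists z.
exists sigma => [|y /Psigma []//].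
have sigma_inj : {in r &, injective sigma}.
  move=> a b ar br hab; apply: NNPP => /eqP nab; apply: (r_sep ar br nab).
  have [_ ha] := Psigma a ar; have [_ hb] := Psigma b br.
  by have := vgeB ha hb; rewrite hab; congr vge; ring.
have uniq_sigma : uniq (map sigma r) by rewrite map_inj_in_uniq.
apply: uniq_perm => //; apply: (uniq_min_size uniq_sigma _ _).2.
- by move=> z /mapP [y /Psigma [? _] ->].
- by rewrite size_map.
Qed.

Fixpoint expansions (M : int) (k : nat) : seq F :=
  if k is k'.+1 then [seq x + y * pi ^ (M + k'%:Z) | x <- expansions M k', y <- r]
  else [:: 0].

Lemma size_expansions_gt0 M k : (0 < size (expansions M k))%N.
Proof.
have [y yr _] : exists2 y, y \in r & vge v (0 - y) 1 by apply: r_cover; left.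
have r_gt0 : (0 < size r)%N by rewrite -has_predT; apply/hasP; exists y.
by elim: k => [//|k IH] /=; rewrite size_allpairs muln_gt0 IH.
Qed.

Lemma expansions_cover M k x : vge v x M ->
  exists2 y, y \in expansions M k & vge v (x - y) (M + k%:Z).
Proof.
move=> hx; elim: k => [|k [y yB hy]]; first by exists 0; rewrite ?inE ?subr0 ?addr0.
set p := pi ^ (M + k%:Z).
have hp : p != 0 by apply: expfz_neq0.
have hp' : vge v p (M + k%:Z) by right; rewrite v_expz_pi.
have [t tr ht] : exists2 t, t \in r & vge v ((x - y) / p - t) 1.
  apply: r_cover; case: (eqVneq (x - y) 0) => [->|nd]; first by rewrite mul0r; left.
  rewrite vgeP ?mulf_neq0 ?invr_eq0 // vM ?invr_eq0 // vV // v_expz_pi.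
  by move/(vgeP _ nd): hy; int_lia.
exists (y + t * p); first exact: allpairs_f.
have -> : x - (y + t * p) = ((x - y) / p - t) * p by rewrite mulrBl divfK //; ring.
by apply: (vge_le (vgeM ht hp')); int_lia.
Qed.

Lemma ball_cover M L : exists R : seq F,
  forall x, vge v x M -> exists2 y, y \in R & vge v (x - y) L.
Proof.
exists (expansions M `|L - M|) => x /(expansions_cover `|L - M|) [y yR hy].
by exists y => //; apply: (vge_le hy); int_lia.
Qed.

Section CharacterSums.
Variables (C : numClosedFieldType) (e : F -> C) (n0 : int).
Hypotheses (eD : forall x y, e (x + y) = e x * e y)
  (e_cond : forall x, vge v x n0 -> e x = 1)
  (e_sharp : exists x, vge v x (n0 - 1) /\ e x != 1).

Lemma sum_residues_char c : c != 0 -> v c = n0 - 1 -> \sum_(y <- r) e (y * c) = 0.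
Proof.
move=> hc hvc; have hc' : vge v c (n0 - 1) by right; rewrite hvc.
have e_small t : vge v t 1 -> e (t * c) = 1.
  by move=> ht; apply: e_cond; apply: (vge_le (vgeM ht hc')); int_lia.
have [x [hx ex]] := e_sharp.
have nx : x != 0 by apply: contraNneq ex => ->; apply/eqP/e_cond; left.
have [y0 y0r hy0] : exists2 y0, y0 \in r & vge v (x / c - y0) 1.
  by apply: r_cover; rewrite vgeP ?mulf_neq0 ?invr_eq0 // vM ?invr_eq0 // vV //;
     move/(vgeP _ nx): hx; int_lia.
have ey0 : e (y0 * c) != 1.
  have -> : y0 * c = x + (y0 - x / c) * c by rewrite mulrBl divfK // addrC subrK.
  by rewrite eD (e_small _ (vge_sym hy0)) mulr1.
have [sigma perm_sigma hsigma] := residue_translate y0r.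
have shift : \sum_(y <- r) e (y * c) = e (y0 * c) * \sum_(y <- r) e (y * c).
  rewrite mulr_sumr -{1}(perm_big _ perm_sigma) big_map; apply: eq_big_seq => y yr.
  rewrite -eD -[e (sigma y * c)]mulr1 -(e_small _ (hsigma y yr)) -eD.
  by congr e; ring.
apply/eqP; move/eqP: shift; rewrite -subr_eq0 -{1}(mul1r (\sum_(y <- r) _)) -mulrBl.
by rewrite mulf_eq0 subr_eq0 eq_sym (negPf ey0).
Qed.

Lemma sum_expansions_char M k s : s != 0 ->
  (exists2 j : nat, (j < k)%N & v (pi ^ (M + j%:Z) * s) = n0 - 1) ->
  \sum_(b <- expansions M k) e (b * s) = 0.
Proof.
move=> hs; elim: k => [[j]//|k IH [j hj hv]].
rewrite /= big_allpairs_dep /=.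
have -> : \sum_(x <- expansions M k) \sum_(y <- r) e ((x + y * pi ^ (M + k%:Z)) * s)
   = (\sum_(x <- expansions M k) e (x * s)) * \sum_(y <- r) e (y * (pi ^ (M + k%:Z) * s)).
  rewrite mulr_suml; apply: eq_bigr => x _; rewrite mulr_sumr; apply: eq_bigr => y _.
  by rewrite mulrDl eD mulrA.
case: (ltngtP j k) => hjk.
- by rewrite IH ?mul0r //; exists j.
- by move: hj; rewrite ltnS leqNgt hjk.
- by rewrite sum_residues_char ?mulr0 ?mulf_neq0 ?expfz_neq0 // -hjk.
Qed.

Lemma exists_vanishing_char_sum lo hi : exists B : seq F, (0 < size B)%N /\
  forall s, s != 0 -> lo <= v s <= hi -> \sum_(b <- B) e (b * s) = 0.
Proof.
exists (expansions (n0 - 1 - hi) `|hi - lo|.+1); split.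
  exact: size_expansions_gt0.
move=> s hs /andP [h1 h2]; apply: sum_expansions_char => //.
exists `|hi - v s|%N; first by int_lia.
by rewrite vM ?expfz_neq0 // v_expz_pi; int_lia.
Qed.

End CharacterSums.
End ResidueSystem.

Section MiddleAction.
Variables (q : nat) (C : numClosedFieldType) (e : F -> C).
Hypotheses (q_gt1 : (1 < q)%N) (eD : forall x y, e (x + y) = e x * e y) (e0 : e 0 = 1)
  (e_avg : forall lo hi, exists B : seq F, (0 < size B)%N /\
     forall s, s != 0 -> lo <= v s <= hi -> \sum_(b <- B) e (b * s) = 0)
  (F_ball_cover : forall M L, exists R : seq F,
     forall x, vge v x M -> exists2 y, y \in R & vge v (x - y) L).
Implicit Types (Psi f : Yfun F C) (g : 'M[F]_2).

Definition inY_at (N : int) Psi : Prop :=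
  (forall g y, Psi g y != 0 ->
     [/\ forall i j, vge v (g i j) (- N), y != 0 & - N <= v y <= N]) /\
  (forall g g' y y', (forall i j, vge v (g i j - g' i j) N) -> vge v (y - y') N ->
     Psi g y = Psi g' y').

Lemma inY_at_le N N' Psi : inY_at N Psi -> N <= N' -> inY_at N' Psi.
Proof.
move=> [hs hl] hN; split.
  move=> g y /hs [hg hy hv]; split => // [i j|]; last by int_lia.
  by apply: (vge_le (hg i j)); int_lia.
move=> g g' y y' hg hy; apply: hl => [i j|].
  by apply: (vge_le (hg i j)); int_lia.
by apply: (vge_le hy); int_lia.
Qed.

Lemma inY_at_large N0 Psi : inY v Psi -> exists2 N, N0 <= N & inY_at N Psi.
Proof. by move=> [N hN]; exists (Num.max N N0); [|apply: (inY_at_le hN)]; int_lia. Qed.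

Lemma inY_at_uniform (R : seq F) (Phi : F -> Yfun F C) :
  (forall a, a \in R -> inY v (Phi a)) ->
  exists N, 0 <= N /\ forall a, a \in R -> inY_at N (Phi a).
Proof.
elim: R => [|b R IH] hR; first by exists 0.
have [N [N_ge0 hN]] : exists N, 0 <= N /\ forall a, a \in R -> inY_at N (Phi a).
  by apply: IH => a aR; apply: hR; rewrite inE aR orbT.
have [Nb hNb] := hR b (mem_head b R).
exists (Num.max Nb N); split; first by int_lia.
move=> a; rewrite inE => /orP [/eqP ->|/hN h].
  by apply: (inY_at_le hNb); int_lia.
by apply: (inY_at_le h); int_lia.
Qed.

Lemma inY_atD N Psi1 Psi2 : inY_at N Psi1 -> inY_at N Psi2 ->
  inY_at N (fun g y => Psi1 g y + Psi2 g y).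
Proof.
move=> [s1 l1] [s2 l2]; split.
  move=> g y; case: (eqVneq (Psi1 g y) 0) => [->|h1 _]; last exact: s1.
  by rewrite add0r; apply: s2.
by move=> g g' y y' hg hy; rewrite (l1 g g' y y') // (l2 g g' y y').
Qed.

Lemma inYD Psi1 Psi2 : inY v Psi1 -> inY v Psi2 -> inY v (fun g y => Psi1 g y + Psi2 g y).
Proof.
move=> [N1 h1] [N2 h2]; exists (Num.max N1 N2).
by apply: inY_atD; [apply: (inY_at_le h1) | apply: (inY_at_le h2)]; int_lia.
Qed.

Lemma inYZ (c : C) Psi : inY v Psi -> inY v (fun g y => c * Psi g y).
Proof.
move=> [N [hs hl]]; exists N; split.
  by move=> g y; rewrite mulf_eq0 negb_or => /andP [_ /hs].
by move=> g g' y y' hg hy; rewrite (hl g g' y y').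
Qed.

Lemma inYB Psi1 Psi2 : inY v Psi1 -> inY v Psi2 -> inY v (fun g y => Psi1 g y - Psi2 g y).
Proof.
move=> h1 /(inYZ (-1)) /(inYD h1).
by congr inY; do 2!apply: functional_extensionality => ?; rewrite mulN1r.
Qed.

Lemma inY_dilate a Psi : a != 0 -> inY v Psi -> inY v (fun g y => Psi g (a * y)).
Proof.
move=> ha [N [hs hl]]; exists (N + `|v a|%:Z); split.
  move=> g y /hs [hg hay hv].
  have ny : y != 0 by apply: contraNneq hay => ->; rewrite mulr0.
  split=> // [i j|]; first by apply: (vge_le (hg i j)); int_lia.
  by move: hv; rewrite vM //; int_lia.
move=> g g' y y' hg hy; apply: hl => [i j|]; first by apply: (vge_le (hg i j)); int_lia.
rewrite -mulrBr; apply: (vge_le (vgeM (_ : vge v a (v a)) hy)); last by int_lia.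
by right.
Qed.

Definition all_inY (l : seq (F * Yfun F C)) : Prop :=
  foldr (fun p P => inY v p.2 /\ P) True l.

Lemma all_inY_map (h : F * Yfun F C -> F * Yfun F C) l :
  (forall p, inY v p.2 -> inY v (h p).2) -> all_inY l -> all_inY (map h l).
Proof. by move=> hf; elim: l => [//|p l IH] /= [h1 h2]; split; [apply: hf|apply: IH]. Qed.

Lemma all_inY_map_seq (h : F -> F * Yfun F C) (l : seq F) :
  (forall b, inY v (h b).2) -> all_inY (map h l).
Proof. by move=> hf; elim: l => [//|b l IH] /=; split. Qed.

Lemma inYUthZ (c : C) f : inYUth q v e f -> inYUth q v e (fun g y => c * f g y).
Proof.
move=> [s [hs h]]; exists (map (fun p => (p.1, fun g y => c * p.2 g y)) s); split.
  by apply: all_inY_map => // p; apply: inYZ.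
by move=> g y; rewrite h big_map mulr_sumr; apply: eq_bigr => p _; rewrite /tauP /=; ring.
Qed.

Lemma absF1 : absF q v C 1 = 1.
Proof. by rewrite /absF v1 oppr0 expr0z. Qed.

Lemma absF_neq0 a : absF q v C a != 0.
Proof. by apply: expfz_neq0; rewrite pnatr_eq0; int_lia. Qed.

Lemma absFM a b : a != 0 -> b != 0 -> absF q v C (a * b) = absF q v C a * absF q v C b.
Proof.
move=> ha hb; rewrite /absF vM // opprD exprzDr // unitfE pnatr_eq0; int_lia.
Qed.

Definition null_on_locus f : Prop := forall g y, \det g * y = 1 -> f g y = 0.

Lemma inYUth_null f : inYUth q v e f -> null_on_locus f.
Proof.
move=> [s [_ h]] g y hgy; rewrite h big1 // => p _.
by rewrite /tauP absF1 mul1r -mulrA hgy mulr1 mul1r subrr.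
Qed.

Lemma locus_inv g y : \det g * y = 1 -> \det g != 0 /\ y = (\det g)^-1.
Proof.
move=> h; split; last by rewrite (mulr1_eq h).
by apply: contra_eq_neq h => ->; rewrite mul0r eq_sym oner_neq0.
Qed.

Lemma inY_at_locus_gap N Psi g y : 1 <= N -> inY_at N Psi -> null_on_locus Psi ->
  Psi g y != 0 ->
  \det g * y - 1 != 0 /\ - (N + N + N) <= v (\det g * y - 1) < N + N.
Proof.
move=> N1 [hs hl] hnull hPsi; have [hg hy hv] := hs g y hPsi.
have nz : \det g * y - 1 != 0.
  by apply: contra hPsi; rewrite subr_eq0 => /eqP /hnull ->.
split=> //; apply/andP; split.
  have h1 : vge v (\det g * y) (- N + - N + - N) by apply: vgeM; [apply: vge_det | right; int_lia].
  have h2 : vge v 1 (- N + - N + - N) by right; rewrite v1; int_lia.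
  by move: (vgeB h1 h2) => /(vgeP _ nz); int_lia.
rewrite ltNge; apply/negP => hbig.
have [nt vt] : \det g * y != 0 /\ v (\det g * y) = 0.
  have hsmall : vge v (\det g * y - 1) (v 1 + 1) by right; rewrite v1; int_lia.
  by have [] := v_addr_dominant (oner_neq0 F) hsmall; rewrite addrC subrK v1.
have nd : \det g != 0 by apply: contraNneq nt => ->; rewrite mul0r.
have hclose : vge v (y - (\det g)^-1) N.
  have -> : y - (\det g)^-1 = (\det g * y - 1) * (\det g)^-1.
    by rewrite mulrBl mul1r mulrAC mulfV // mul1r.
  have hi : vge v (\det g)^-1 (- N) by right; rewrite vV //; move: vt; rewrite vM //; int_lia.
  by apply: (vge_le (vgeM (_ : vge v _ (N + N)) hi)); [right | int_lia].
move/eqP: hPsi; apply; rewrite (hl g g y (\det g)^-1) //; last by move=> i j; apply: vge_refl.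
by apply: hnull; rewrite mulfV.
Qed.

(* With the weight -e(-b), tau(u_b) - theta(u_b) becomes multiplication by
   1 - e(b (det g y - 1)). *)
Lemma inYUth_average Psi (B : seq F) : inY v Psi ->
  inYUth q v e (fun g y => Psi g y * \sum_(b <- B) (1 - e (b * (\det g * y - 1)))).
Proof.
move=> hPsi; exists (map (fun b => (b, fun g y => - e (- b) * Psi g y)) B); split.
  by apply: all_inY_map_seq => b; apply: inYZ.
move=> g y; rewrite big_map mulr_sumr; apply: eq_bigr => b _.
have ebN : e b * e (- b) = 1 by rewrite -eD subrr e0.
have -> : e (b * (\det g * y - 1)) = e (b * \det g * y) * e (- b) by rewrite -eD; congr e; ring.
rewrite /tauP /= absF1 !mul1r.
transitivity (Psi g y * (e b * e (- b)) - Psi g y * e (b * \det g * y) * e (- b)).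
  by rewrite ebN; ring.
by ring.
Qed.

Lemma null_inYUth Psi : inY v Psi -> null_on_locus Psi -> inYUth q v e Psi.
Proof.
move=> hY hnull; have [N N1 hN] := inY_at_large 1 hY.
have [B [B_gt0 hB]] := e_avg (- (N + N + N)) (N + N - 1).
have -> : Psi = fun g y => (size B)%:R^-1 *
    (Psi g y * \sum_(b <- B) (1 - e (b * (\det g * y - 1)))).
  apply: functional_extensionality => g; apply: functional_extensionality => y.
  case: (eqVneq (Psi g y) 0) => [->|hP]; first by rewrite !mul0r mulr0.
  have [nz /andP [hlo hhi]] := inY_at_locus_gap N1 hN hnull hP.
  rewrite sumrB hB ?subr0 //; last by apply/andP; split; int_lia.
  rewrite big_const_seq count_predT iter_addr_0 mulrCA mulVf ?mulr1 //.
  by rewrite pnatr_eq0 -lt0n.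
exact: inYUthZ (inYUth_average B hY).
Qed.

Lemma inPPY_support phi : inPPY q v e phi -> exists N, forall a g, a != 0 -> \det g != 0 ->
  ~ (- N <= v a <= N) -> phi a g (\det g)^-1 = 0.
Proof.
move=> [_ [N hN] _]; exists N => a g ha nd hr.
by apply: (inYUth_null (hN a ha hr)); rewrite mulfV.
Qed.

Lemma inPPY_locconst phi : inPPY q v e phi -> exists N, forall a a' g, a != 0 -> a' != 0 ->
  vge v (a - a') N -> \det g != 0 -> phi a g (\det g)^-1 = phi a' g (\det g)^-1.
Proof.
move=> [_ _ [N hN]]; exists N => a a' g ha ha' haa' nd; apply/eqP; rewrite -subr_eq0.
by apply/eqP; apply: (inYUth_null (hN a a' ha ha' haa')); rewrite mulfV.
Qed.

Lemma inPPY_dilate t phi : t != 0 -> inPPY q v e phi ->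
  inPPY q v e (fun a => phi (a * t)).
Proof.
move=> ht [h1 [N2 h2] [N3 h3]]; split.
- by move=> a ha; apply: h1; rewrite mulf_neq0.
- exists (N2 + `|v t|%:Z) => a ha hr; apply: h2; first by rewrite mulf_neq0.
  by rewrite vM //; int_lia.
- exists (N3 - v t) => a a' ha ha' haa'; apply: h3; rewrite ?mulf_neq0 // -mulrBl.
  by apply: (vge_le (vgeM haa' (_ : vge v t (v t)))); [right | int_lia].
Qed.

Section Counit.
Variable eps : (F -> Yfun F C) -> Yfun F C.
Hypothesis eps_counit : is_counit q v e eps.

(* Equivariance under diag(t, 1) and the adjunction identity for the translate of phi,
   evaluated on the locus det g * y = 1 where Y(U, theta) vanishes. *)
Lemma counitE phi g y : inPPY q v e phi -> \det g != 0 -> y != 0 ->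
  eps phi g y = (absF q v C (\det g * y))^-1 * phi (\det g * y) g (\det g)^-1.
Proof.
move=> hphi nd ny; have [_ _ _ eps_act eps_adj] := eps_counit.
set t := \det g * y; have ht : t != 0 by rewrite mulf_neq0.
have act0 : actPP e t 0 phi = fun a => phi (a * t).
  by do 3!apply: functional_extensionality => ?; rewrite /actPP mulr0 e0 mul1r.
have := inYUth_null (eps_adj _ (inPPY_dilate ht hphi)) (mulfV nd).
rewrite -act0 eps_act // /tauP !mul0r e0 mulr1 mul1r.
have -> : t / \det g = y by rewrite /t mulrAC mulfV // mul1r.
move/eqP; rewrite subr_eq0 => /eqP <-.
by rewrite mulrA mulVf ?mul1r // absF_neq0.
Qed.

(* Perturbing g to g + s I with |s| tiny keeps eps phi g y (local constancy) but
   makes |det (g + s I) * y| so small that phi vanishes there. *)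
Lemma counit_eq0 phi g y : inPPY q v e phi -> \det g * y = 0 -> eps phi g y = 0.
Proof.
move=> hphi hdy; have [[eps_Y _] _ _ _ _] := eps_counit.
have [N2 hN2] := inPPY_support hphi.
have [N1 [hs hl]] := eps_Y phi hphi.
apply: NNPP => /eqP hne; have [hg hy hvy] := hs g y hne.
have nd : \det g = 0 by move/eqP: hdy; rewrite mulf_eq0 (negPf hy) orbF => /eqP.
have [s [hs0 hstr hsv]] := exists_small_avoiding (N1 + N1 + N1 + `|N2|%:Z + 1) (\tr g).
have htr : vge v (s + \tr g) (- N1).
  by rewrite mxtrace2; apply: vgeD; [right; int_lia | apply: vgeD].
move/(vgeP _ hstr): htr => htr.
have hd' : \det (g + s%:M) = s * (s + \tr g) by rewrite det_scalar_shift nd add0r.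
have nd' : \det (g + s%:M) != 0 by rewrite hd' mulf_neq0.
move/eqP: hne; apply; rewrite (hl g (g + s%:M) y y); last first.
- exact: vge_refl.
- by apply: vge_scalar_shift; right; int_lia.
rewrite counitE // hN2 ?mulr0 ?mulf_neq0 //.
by rewrite vM // hd' vM //; int_lia.
Qed.

Lemma counit_inYo phi : inPPY q v e phi -> inYo v (eps phi).
Proof.
move=> hphi; have [[eps_Y _] _ _ _ _] := eps_counit.
have [N2 hN2] := inPPY_support hphi.
have [N1 [hs hl]] := eps_Y phi hphi.
split; first by exists N1.
exists (N2 + N1) => g y hne; have [_ hy hvy] := hs g y hne.
have nd : \det g != 0.
  by apply: contraNneq hne => hd; apply/eqP/counit_eq0; rewrite // hd mul0r.
split => //; move: hne; rewrite counitE //.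
case: (boolP (- N2 <= v (\det g * y) <= N2)) => [/andP [_ ht] _ | /negP ht].
  by move: ht; rewrite vM //; int_lia.
by rewrite hN2 ?mulr0 ?eqxx // mulf_neq0.
Qed.

Lemma counit_inj phi phi' : inPPY q v e phi -> inPPY q v e phi' ->
  eps phi = eps phi' -> eqvPPY q v e phi phi'.
Proof.
move=> hphi hphi' E a ha; have [hY _ _] := hphi; have [hY' _ _] := hphi'.
apply: null_inYUth; first by apply: inYB; [apply: hY | apply: hY'].
move=> g y /locus_inv [nd ->].
have ny : a * (\det g)^-1 != 0 by rewrite mulf_neq0 ?invr_eq0.
have := congr1 (fun f => f g (a * (\det g)^-1)) E => /=.
rewrite !counitE // mulrCA mulfV // mulr1 => /mulfI -> //; first by rewrite subrr.
by rewrite invr_eq0 absF_neq0.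
Qed.

End Counit.

Definition dilations Psi : F -> Yfun F C := fun a g y => absF q v C a * Psi g (a * y).

Lemma dilation_locus_bound N No Psi a g y : inY_at N Psi ->
  (forall g y, Psi g y != 0 -> v (\det g) <= No) ->
  a != 0 -> \det g * y = 1 -> Psi g (a * y) != 0 ->
  - (N + N + N) <= v a <= N + No /\ - No <= v y.
Proof.
move=> [hs _] hNo ha /locus_inv [nd ->] hP.
have [hg hy hv] := hs _ _ hP; have hd := hNo _ _ hP.
have /(vgeP _ nd) hd2 := vge_det hg.
by move: hv; rewrite vM ?invr_eq0 // vV //; int_lia.
Qed.

Lemma inPPY_dilations Psi : inYo v Psi -> inPPY q v e (dilations Psi).
Proof.
move=> [hPsi [No hNo]]; have [N N_ge0 hN] := inY_at_large 0 hPsi; have [_ hl] := hN.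
have hNo' g y : Psi g y != 0 -> v (\det g) <= No by move/hNo => [].
have hY a : a != 0 -> inY v (dilations Psi a).
  by move=> ha; apply: inYZ; apply: inY_dilate => //; exists N.
split => //.
- exists (N + N + N + `|No|%:Z) => a ha hr; apply: null_inYUth; first exact: hY.
  move=> g y hgy; rewrite /dilations.
  case: (eqVneq (Psi g (a * y)) 0) => [->|hP]; first by rewrite mulr0.
  by have [] := dilation_locus_bound hN hNo' ha hgy hP; int_lia.
- set L := N + N + `|No|%:Z + 1.
  exists L => a a' ha ha' haa'; apply: null_inYUth; first by apply: inYB; apply: hY.
  move=> g y hgy; apply/eqP; rewrite subr_eq0; apply/eqP; rewrite /dilations.
  have close b b' : b != 0 -> vge v (b - b') L -> Psi g (b * y) != 0 ->
      absF q v C b * Psi g (b * y) = absF q v C b' * Psi g (b' * y).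
    move=> hb hbb hP; have [hvb hvy] := dilation_locus_bound hN hNo' hb hgy hP.
    have vbL : v b < L by rewrite /L; int_lia.
    have [_ vb'] := v_close hb vbL hbb.
    rewrite /absF vb'; congr (_ * _); apply: hl => [i j|]; first exact: vge_refl.
    rewrite -mulrBl; apply: (vge_le (vgeM hbb (_ : vge v y (- No)))); last by int_lia.
    by case: (eqVneq y 0) => [->|ny]; [left | rewrite vgeP].
  case: (eqVneq (Psi g (a * y)) 0) => hP; last exact: close.
  case: (eqVneq (Psi g (a' * y)) 0) => hP'; first by rewrite hP hP' !mulr0.
  by rewrite (close a' a) //; apply: vge_sym.
Qed.

Lemma counit_dilations eps Psi : is_counit q v e eps -> inYo v Psi ->
  eps (dilations Psi) = Psi.
Proof.
move=> hc hPsi; have hphi := inPPY_dilations hPsi.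
apply: functional_extensionality => g; apply: functional_extensionality => y.
case: (eqVneq (\det g * y) 0) => ht.
  rewrite (counit_eq0 hc hphi ht); apply/esym/eqP; apply: contraT => hP.
  have [[N [hs _]] [No hNo]] := hPsi; have [_ hy _] := hs _ _ hP; have [nd _] := hNo _ _ hP.
  by move/eqP: ht; rewrite mulf_eq0 (negPf nd) (negPf hy).
have nd : \det g != 0 by apply: contraNneq ht => ->; rewrite mul0r.
have ny : y != 0 by apply: contraNneq ht => ->; rewrite mulr0.
rewrite (counitE hc hphi nd ny) /dilations mulrA mulVf ?absF_neq0 // mul1r.
by rewrite mulrAC mulfV // mul1r.
Qed.

Definition counit0 (phi : F -> Yfun F C) : Yfun F C := fun g y =>
  if \det g * y == 0 then 0
  else (absF q v C (\det g * y))^-1 * phi (\det g * y) g (\det g)^-1.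

Section ExplicitCounit.
Variables (phi : F -> Yfun F C) (N2 L Nb : int).
Hypotheses (Nb_ge0 : 0 <= Nb) (N2_lt_L : `|N2|%:Z < L)
  (phi_support : forall a g, a != 0 -> \det g != 0 -> ~ (- N2 <= v a <= N2) ->
     phi a g (\det g)^-1 = 0)
  (phi_locconst : forall a a' g, a != 0 -> a' != 0 -> vge v (a - a') L -> \det g != 0 ->
     phi a g (\det g)^-1 = phi a' g (\det g)^-1)
  (phi_reps : forall t, t != 0 -> - N2 <= v t <= N2 ->
     exists2 rho, vge v (t - rho) L & inY_at Nb (phi rho)).

Lemma counit0_rep g y : counit0 phi g y != 0 ->
  exists2 rho, inY_at Nb (phi rho) & [/\ \det g * y != 0, - N2 <= v (\det g * y) <= N2,
    vge v (\det g * y - rho) L, rho != 0 &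
    counit0 phi g y = (absF q v C (\det g * y))^-1 * phi rho g (\det g)^-1].
Proof.
rewrite /counit0; case: (eqVneq (\det g * y) 0) => [->|nt /= hne]; first by rewrite eqxx.
have nd : \det g != 0 by apply: contraNneq nt => ->; rewrite mul0r.
have hr : - N2 <= v (\det g * y) <= N2.
  by apply: contraNT hne => /negP hr; rewrite phi_support ?mulr0.
have [rho hrho hY] := phi_reps nt hr.
have vtL : v (\det g * y) < L by int_lia.
have [nr _] := v_close nt vtL hrho.
by exists rho; rewrite // (phi_locconst nt nr hrho nd).
Qed.

Let N := Nb + Nb + Nb + Nb + `|N2|%:Z + L + 1.

Lemma counit0_support g y : counit0 phi g y != 0 ->
  [/\ forall i j, vge v (g i j) (- N), y != 0 & - N <= v y <= N].
Proof.
move=> hne; have [rho [hs _] [nt hr _ _ E]] := counit0_rep hne.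
have nd : \det g != 0 by apply: contraNneq nt => ->; rewrite mul0r.
have ny : y != 0 by apply: contraNneq nt => ->; rewrite mulr0.
move: hne; rewrite E mulf_eq0 negb_or => /andP [_ /hs [hg _ hv]].
move: hr hv; rewrite vV // vM // => hr hv.
by split=> // [i j|]; [apply: (vge_le (hg i j)) | ]; rewrite /N; int_lia.
Qed.

Lemma counit0_locconst g g' y y' : counit0 phi g y != 0 ->
  (forall i j, vge v (g i j - g' i j) N) -> vge v (y - y') N ->
  counit0 phi g y = counit0 phi g' y'.
Proof.
move=> hne hgg hyy; have [rho [hs hl] [nt hr hrho nr E]] := counit0_rep hne.
have nd : \det g != 0 by apply: contraNneq nt => ->; rewrite mul0r.
have ny : y != 0 by apply: contraNneq nt => ->; rewrite mulr0.
move: (hne); rewrite E mulf_eq0 negb_or => /andP [_ /hs [hg _]]; rewrite vV // => hvd.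
have hg' i j : vge v (g' i j) (- Nb).
  have := vgeB (hg i j) (vge_le (hgg i j) (_ : - Nb <= N)).
  by rewrite opprB addrC subrK; apply; rewrite /N; int_lia.
have hdd := vge_detB hg hg' hgg.
have vdN : v (\det g) < N + - Nb by rewrite /N; int_lia.
have [nd' vd'] := v_close nd vdN hdd.
have htt : vge v (\det g * y - \det g' * y') L.
  have -> : \det g * y - \det g' * y' = (\det g - \det g') * y + \det g' * (y - y') by ring.
  have hyb : vge v y (- (`|N2|%:Z + Nb)).
    by rewrite vgeP //; move: hr; rewrite vM //; int_lia.
  have hdb : vge v (\det g') (- Nb) by right; int_lia.
  by apply: vgeD; [apply: (vge_le (vgeM hdd hyb)) | apply: (vge_le (vgeM hdb hyy))];
    rewrite /N; int_lia.
have vtL : v (\det g * y) < L by int_lia.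
have [nt' vt'] := v_close nt vtL htt.
have hrho' : vge v (\det g' * y' - rho) L := vge_trans (vge_sym htt) hrho.
rewrite /counit0 (negPf nt') (phi_locconst nt' nr hrho' nd') /absF vt'; congr (_ * _).
apply: hl => [i j|]; first by apply: (vge_le (hgg i j)); rewrite /N; int_lia.
have -> : (\det g)^-1 - (\det g')^-1 = (\det g' - \det g) * ((\det g)^-1 * (\det g')^-1).
  by rewrite mulrBl mulrCA mulfV // mulr1 mulrA mulfV // mul1r.
have hi : vge v (\det g)^-1 (- Nb) by right; rewrite vV //; int_lia.
have hi' : vge v (\det g')^-1 (- Nb) by right; rewrite vV //; int_lia.
by apply: (vge_le (vgeM (vge_sym hdd) (vgeM hi hi'))); rewrite /N; int_lia.
Qed.

Lemma counit0_inY_at : inY_at N (counit0 phi).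
Proof.
split; first exact: counit0_support.
move=> g g' y y' hgg hyy.
case: (eqVneq (counit0 phi g y) 0) => h; last exact: counit0_locconst.
case: (eqVneq (counit0 phi g' y') 0) => h'; first by rewrite h h'.
by apply/esym/counit0_locconst => // [i j|]; apply: vge_sym.
Qed.

End ExplicitCounit.

Lemma counit0_inY phi : inPPY q v e phi -> inY v (counit0 phi).
Proof.
move=> hphi; have [hY _ _] := hphi.
have [N2 hsupp] := inPPY_support hphi; have [N3 hlc] := inPPY_locconst hphi.
pose L := Num.max N3 (`|N2|%:Z + 1).
have [N3L N2L] : N3 <= L /\ `|N2|%:Z < L by rewrite /L; int_lia.
have [R hR] := F_ball_cover (- `|N2|%:Z) L.
have [Nb [Nb_ge0 hNb]] : exists Nb, 0 <= Nb /\
    forall rho, rho \in [seq rho <- R | rho != 0] -> inY_at Nb (phi rho).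
  by apply: inY_at_uniform => a; rewrite mem_filter => /andP [/hY].
eexists; apply: (counit0_inY_at Nb_ge0 N2L hsupp).
  by move=> a a' g ha ha' haa'; apply: hlc => //; apply: (vge_le haa').
move=> t nt /andP [hlo hhi].
have [rho rR hrho] : exists2 rho, rho \in R & vge v (t - rho) L.
  by apply: hR; rewrite vgeP //; int_lia.
have vtL : v t < L by int_lia.
have [nr _] := v_close nt vtL hrho.
by exists rho => //; apply: hNb; rewrite mem_filter nr.
Qed.

Lemma counit0_is_counit : is_counit q v e counit0.
Proof.
have fext2 (f f' : Yfun F C) : (forall g y, f g y = f' g y) -> f = f'.
  by move=> E; do 2!apply: functional_extensionality => ?; apply: E.
split.
- split; first exact: counit0_inY.
  move=> phi phi' _ _ heq; apply: fext2 => g y.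
  rewrite /counit0; case: ifP => // /negbT nt; congr (_ * _).
  have nd : \det g != 0 by apply: contraNneq nt => ->; rewrite mul0r.
  apply/eqP; rewrite -subr_eq0; apply/eqP; apply: (inYUth_null (heq _ nt)).
  by rewrite mulfV.
- move=> phi phi' _ _; apply: fext2 => g y.
  by rewrite /counit0; case: ifP => _; [rewrite addr0 | rewrite mulrDr].
- move=> c phi _; apply: fext2 => g y.
  by rewrite /counit0; case: ifP => _; [rewrite mulr0 | rewrite mulrCA].
- move=> a' b' phi ha _; apply: fext2 => g y.
  rewrite /counit0 /tauP /actPP.
  have -> : \det g * (a' * y) = \det g * y * a' by ring.
  rewrite [\det g * y * a' == 0]mulf_eq0 (negPf ha) orbF.
  case: ifP => [_|/negbT nt]; first by rewrite !mulr0.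
  rewrite (absFM nt ha) invfM.
  have -> : b' * \det g * y = \det g * y * b' by ring.
  have hA : absF q v C a' * (absF q v C a')^-1 = 1 by rewrite mulfV ?absF_neq0.
  rewrite [RHS]mulrA [in RHS](mulrC _ ((absF q v C (\det g * y))^-1 * _)) -!mulrA.
  by rewrite (mulrA _ (absF q v C a')) (mulrC _ (absF q v C a')) hA mul1r mulrCA.
- move=> phi hphi; have [hY _ _] := hphi.
  apply: null_inYUth; first by apply: inYB; [apply: counit0_inY | apply: hY; apply: oner_neq0].
  move=> g y hgy; have [nd hy] := locus_inv hgy.
  by rewrite /counit0 hgy oner_eq0 /= absF1 invr1 mul1r -hy subrr.
Qed.

Theorem mirabolic_counit :
  (exists eps, is_counit q v e eps) /\
  (forall eps, is_counit q v e eps ->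
     (forall phi phi', inPPY q v e phi -> inPPY q v e phi' ->
        eps phi = eps phi' -> eqvPPY q v e phi phi') /\
     (forall Psi, inYo v Psi <-> exists2 phi, inPPY q v e phi & eps phi = Psi)).
Proof.
split; first by exists counit0; exact: counit0_is_counit.
move=> eps hc; split => [phi phi'|Psi]; first exact: counit_inj.
split => [hPsi|[phi hphi <-]]; last exact: counit_inYo.
by exists (dilations Psi); [exact: inPPY_dilations | exact: counit_dilations].
Qed.

End MiddleAction.
End Uniformizer.
End Valuation.

Theorem lemma2p17 (F : fieldType) (q : nat) (v : F -> int)
  (hF : nonarch_local_field q v) (hchar : ~~ (2%N \in [pchar F]))
  (C : numClosedFieldType) (e : F -> C) (he : nontriv_char v e) :
  (exists eps, is_counit q v e eps) /\
  (forall eps, is_counit q v e eps ->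
     (forall phi phi', inPPY q v e phi -> inPPY q v e phi' ->
        eps phi = eps phi' -> eqvPPY q v e phi phi') /\
     (forall Psi : Yfun F C,
        inYo v Psi <-> exists2 phi, inPPY q v e phi & eps phi = Psi)).
Proof.
have [q_gt1 [vM vD] [pi [pi_neq0 v_pi]] [r [_ r_uniq r_int r_sep r_cover]] _] := hF.
have [eD e_nontriv e_small] := he.
have e0 : e 0 = 1 by have [N eN] := e_small; apply: eN; left.
have [n0 [e_cond e_sharp]] := exists_conductor e_nontriv e_small.
apply: (mirabolic_counit vM vD pi_neq0 v_pi q_gt1 eD e0).
- exact (exists_vanishing_char_sum vM vD pi_neq0 v_pi r_uniq r_int r_sep r_cover
    eD e_cond e_sharp).
- exact (ball_cover vM pi_neq0 v_pi r_cover).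
Qed.
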